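(* Consider the chance-constrained network design problem described in the context, with $\alpha\in[0,1]$. For each commodity $k\in K$ define $$\bar d^k=\min_{z\in\{0,1\}^S}\Big\{\sum_{s=1}^S d^k(\omega_s)p_s(1-z_s)\ \Big|\ \sum_{s=1}^S p_sz_s\le\alpha\Big\}.$$ Then for every $y\in\{0,1\}^{|A|}$ satisfying $\sum_{s\in[S]}p_s\mathbf{1}\{SP(y,\omega_s)\text{ is infeasible}\}\le\alpha$ there exist $\bar x^k_{ij}\ge0$ ($k\in K$, $(i,j)\in A^k$) such that $$\sum_{j:(j,i)\in A^k}\bar x^k_{ji}=\sum_{j:(i,j)\in A^k}\bar x^k_{ij}\ \ \forall k\in K,\ i\in N\setminus\{O(k),D(k)\},$$ $$\sum_{k\in K:(i,j)\in A^k}\bar x^k_{ij}\le u_{ij}y_{ij}\ \ \forall (i,j)\in A,\qquad \sum_{j:(j,D(k))\in A^k}\bar x^k_{jD(k)}\ge\bar d^k\ \ \forall k\in K.$$ That is, these constraints (in variables $y$ and $\bar x$) are valid inequalities for the problem.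
   Context: Directed graph $G=(N,A)$; arc $(i,j)$ built at cost $f_{ij}\ge0$ with capacity $u_{ij}\ge0$ when $y_{ij}=1$. Commodities $K$, each with origin $O(k)$ and destination $D(k)$; admissible arcs $A^k=\{(i,j)\in A: j\neq O(k),\ i\neq D(k)\}$. Finitely many scenarios $\omega_s$, $s\in[S]=\{1,\dots,S\}$, with probabilities $p_s>0$, $\sum_s p_s=1$, and demands $d^k(\omega_s)\ge0$. $SP(y,\omega)$ is the system in flows $x^k_{ij}\ge0$ ($k\in K$, $(i,j)\in A^k$): flow conservation $\sum_{j:(j,i)\in A}x^k_{ji}=\sum_{j:(i,j)\in A}x^k_{ij}$ for all $k$ and $i\in N\setminus\{O(k),D(k)\}$ (sums over arcs in $A^k$); joint capacity $\sum_{k:(i,j)\in A^k}x^k_{ij}\le u_{ij}y_{ij}$ for all $(i,j)\in A$; demand $\sum_{j:(j,D(k))\in A^k}x^k_{jD(k)}\ge d^k(\omega)$ for all $k\in K$. The problem is $\min\{f^\top y: y\in\{0,1\}^{|A|},\ \sum_s p_s\mathbf 1\{SP(y,\omega_s)\text{ infeasible}\}\le\alpha\}$. *)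

From HB Require Import structures.
From mathcomp Require Import all_boot all_order all_algebra.
From mathcomp Require Import boolp.
Set Implicit Arguments. Unset Strict Implicit. Unset Printing Implicit Defensive.
Import Order.TTheory GRing.Theory Num.Theory.
Local Open Scope ring_scope.

Section Network.
Variables (R : realFieldType) (N K : finType).
Variables (A : {set N * N}) (O D : K -> N).

Definition Ak (k : K) : {set N * N} :=
  [set a in A | (a.2 != O k) && (a.1 != D k)].

(* The system SP(y, ·) with demand vector dem : K -> R and capacities u;
   flows x k a are only meaningful (and constrained) for a ∈ A^k. *)
Definition SP_feasible (u : N * N -> R) (y : N * N -> bool) (dem : K -> R) : Prop :=
  exists x : K -> N * N -> R,
    [/\ (forall k a, a \in Ak k -> 0 <= x k a),
        (forall k i, i != O k -> i != D k ->
           \sum_(a in Ak k | a.2 == i) x k a = \sum_(a in Ak k | a.1 == i) x k a),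
        (forall a, a \in A -> \sum_(k | a \in Ak k) x k a <= u a * (y a)%:R) &
        (forall k, dem k <= \sum_(a in Ak k | a.2 == D k) x k a)].

End Network.

(* dbar^k = min over z ∈ {0,1}^S with Σ p_s z_s ≤ α of Σ d^k(ω_s) p_s (1 - z_s).
   The fold starts at the value for z = 0, which is feasible when α ≥ 0, so this
   is exactly the minimum. *)
Definition dbar (R : realFieldType) (S : nat) (p : 'I_S -> R) (alpha : R)
  (dk : 'I_S -> R) : R :=
  let v0 := \sum_(s < S) dk s * p s in
  \big[Order.min/v0]_(z : {ffun 'I_S -> bool} |
       \sum_(s < S) p s * (z s)%:R <= alpha)
     \sum_(s < S) dk s * p s * (1 - (z s)%:R).

(** The constraints are satisfied by averaging scenario flows.  Let F be the
    set of scenarios in which SP(y, ω_s) is feasible and pick a feasible flow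
    x_s for each s ∈ F.  Since the p_s are nonnegative with total mass at most
    1, the combination Σ_{s∈F} p_s x_s still satisfies conservation and the
    capacities u y, and it delivers Σ_{s∈F} p_s d^k(ω_s) to D(k).  The chance
    constraint says that z = 1{s ∉ F} is admissible in the minimum defining
    d̄^k, whose objective at this z is exactly that delivered amount. *)
From HB Require Import structures.
From mathcomp Require Import all_boot all_order all_algebra.
From mathcomp Require Import boolp.
Import Order.TTheory GRing.Theory Num.Theory.
Local Open Scope ring_scope.

Section Flows.
Variables (R : realFieldType) (N K : finType) (A : {set N * N}) (O D : K -> N).
Variables (u : N * N -> R) (y : N * N -> bool).
Hypothesis u_ge0 : forall a, a \in A -> 0 <= u a.

Definition is_flow (dem : K -> R) (x : K -> N * N -> R) : Prop :=
  [/\ (forall k a, a \in Ak A O D k -> 0 <= x k a),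
      (forall k i, i != O k -> i != D k ->
         \sum_(a in Ak A O D k | a.2 == i) x k a
         = \sum_(a in Ak A O D k | a.1 == i) x k a),
      (forall a, a \in A -> \sum_(k | a \in Ak A O D k) x k a <= u a * (y a)%:R) &
      (forall k, dem k <= \sum_(a in Ak A O D k | a.2 == D k) x k a)].

Lemma is_flow_combination (I : finType) (P : pred I) (w : I -> R)
    (dem : I -> K -> R) (X : I -> K -> N * N -> R) :
  (forall i, P i -> 0 <= w i) -> \sum_(i | P i) w i <= 1 ->
  (forall i, P i -> is_flow (dem i) (X i)) ->
  is_flow (fun k => \sum_(i | P i) w i * dem i k)
          (fun k a => \sum_(i | P i) w i * X i k a).
Proof.
move=> w_ge0 w_le1 flowX; split.
- move=> k a ak; apply: sumr_ge0 => i Pi.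
  by have [X_ge0 _ _ _] := flowX i Pi; rewrite mulr_ge0 ?w_ge0 ?X_ge0.
- move=> k v vO vD; rewrite exchange_big [in RHS]exchange_big.
  apply: eq_bigr => i Pi; rewrite -!mulr_sumr.
  by have [_ conserve _ _] := flowX i Pi; rewrite conserve.
- move=> a aA; rewrite exchange_big.
  have cap_ge0 : 0 <= u a * (y a)%:R by rewrite mulr_ge0 ?u_ge0.
  apply: (@le_trans _ _ (\sum_(i | P i) w i * (u a * (y a)%:R))).
    apply: ler_sum => i Pi; rewrite -mulr_sumr.
    by have [_ _ cap _] := flowX i Pi; rewrite ler_wpM2l ?w_ge0 ?cap.
  by rewrite -mulr_suml ler_piMl.
- move=> k; rewrite exchange_big.
  apply: ler_sum => i Pi; rewrite -mulr_sumr.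
  by have [_ _ _ demand] := flowX i Pi; rewrite ler_wpM2l ?w_ge0 ?demand.
Qed.

Lemma SP_feasible_combination (I : finType) (P : pred I) (w : I -> R)
    (dem : I -> K -> R) :
  (forall i, P i -> 0 <= w i) -> \sum_(i | P i) w i <= 1 ->
  (forall i, P i -> SP_feasible A O D u y (dem i)) ->
  SP_feasible A O D u y (fun k => \sum_(i | P i) w i * dem i k).
Proof.
move=> w_ge0 w_le1 feas.
have flow_of i : exists x, P i -> is_flow (dem i) x.
  have [Pi|_] := boolP (P i); last by exists (fun _ _ => 0).
  by have [x flow_x] := feas i Pi; exists x.
have [X flowX] := choice flow_of.
exists (fun k a => \sum_(i | P i) w i * X i k a).
exact: is_flow_combination.
Qed.

Lemma SP_feasible_le (dem dem' : K -> R) :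
  (forall k, dem' k <= dem k) ->
  SP_feasible A O D u y dem -> SP_feasible A O D u y dem'.
Proof.
move=> le_dem [x [x_ge0 conserve cap demand]]; exists x; split=> // k.
exact: le_trans (le_dem k) (demand k).
Qed.

End Flows.

Lemma dbar_le_sum (R : realFieldType) (S : nat) (p : 'I_S -> R) (alpha : R)
    (dk : 'I_S -> R) (P : pred 'I_S) :
  \sum_(s | ~~ P s) p s <= alpha ->
  dbar p alpha dk <= \sum_(s | P s) p s * dk s.
Proof.
move=> miss_le; set z := [ffun s => ~~ P s].
have z_admissible : \sum_(s < S) p s * (z s)%:R <= alpha.
  by under eq_bigr do rewrite ffunE mulr_natr mulrb; rewrite -big_mkcond.
apply: le_trans (bigmin_le_cond _ _ z_admissible) _.
rewrite [leRHS]big_mkcond le_eqVlt; apply/orP; left; apply/eqP.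
apply: eq_bigr => s _.
by rewrite ffunE; case: (P s); rewrite /= ?subr0 ?subrr ?mulr1 ?mulr0 // mulrC.
Qed.

Theorem proposition2 (R : realFieldType) (N K : finType) (A : {set N * N})
  (O D : K -> N) (u : N * N -> R) (S : nat) (p : 'I_S -> R)
  (d : K -> 'I_S -> R) (alpha : R)
  (hu : forall a, a \in A -> 0 <= u a)
  (hp : forall s, 0 < p s) (hp1 : \sum_(s < S) p s = 1)
  (hd : forall k s, 0 <= d k s)
  (halpha0 : 0 <= alpha) (halpha1 : alpha <= 1)
  (y : N * N -> bool)
  (hy : \sum_(s < S) p s * (~~ `[< SP_feasible A O D u y (fun k => d k s) >])%:R
          <= alpha) :
  SP_feasible A O D u y (fun k => dbar p alpha (d k)).
Proof.
set feasible := fun s => `[< SP_feasible A O D u y (fun k => d k s) >].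
have p_ge0 s : 0 <= p s by exact: ltW.
have miss_le : \sum_(s | ~~ feasible s) p s <= alpha.
  by move: hy; under eq_bigr do rewrite mulr_natr mulrb; rewrite -big_mkcond.
have hit_le1 : \sum_(s | feasible s) p s <= 1.
  by rewrite -hp1 [leRHS](bigID feasible) /= lerDl sumr_ge0.
have feasible_mix :
    SP_feasible A O D u y (fun k => \sum_(s | feasible s) p s * d k s).
  by apply: SP_feasible_combination => // s /asboolP.
by apply: SP_feasible_le feasible_mix => k; exact: dbar_le_sum.
Qed.
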